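(* Let $m = p + 12k$ with $k \geq 0$ an integer and $p \in \{11,13,17,19\}$. If $G_{2m}$ admits three type-2 basic sets of dipaths and two type-1 basic sets of dipaths such that all the dipaths and directed cycles appearing in these five sets (32 in total) are pairwise arc-disjoint, then $G_{2m}$ admits a $\vec{C}_m$-factorization.
   Context: Let $m$ be odd. $G_{2m} = \vec{X}(m,\{1,3\}) \wr K^*_2$ is the digraph with vertex set $\{x_a, y_a : a \in \mathbb{Z}_m\}$ whose arcs are: $(u_a, v_b)$ for all $u,v \in \{x,y\}$ and $a,b$ with $b-a \equiv 1$ or $3 \pmod m$, together with $(x_a,y_a)$ and $(y_a,x_a)$ for all $a$. An arc from a vertex with subscript $a$ to one with subscript $b$ has difference equal to the representative of $b-a$ in $\{0,\dots,m-1\}$; a type-$k$ cycle is a directed $m$-cycle whose arc differences sum (as integers) to $km$. $\rho$ sends $x_i\mapsto x_{i+1}$, $y_i\mapsto y_{i+1}$ (mod $m$). For a dipath $P$: $s(P)$, $t(P)$, $\mathrm{len}(P)$ are its first vertex, last vertex and number of arcs; a dipath of length $0$ is a single vertex. $V_0=\{x_j,y_j: 0\le j\le p-1\}$ and $V_i=\{x_j,y_j: p+12(i-1)\le j\le p+12i-1\}$ for $1\le i\le k$. Type-2 basic set: an 8-tuple $(W,X,Y,Z,Q,R,S,T)$ of dipaths with (C1) $Q,R,S,T$ pairwise vertex-disjoint; if $k\ge1$ then $W,X,Y,Z$ pairwise vertex-disjoint, and if $k=0$ then $WX$, $YZ$ are vertex-disjoint type-2 directed cycles; (C2) $s(X)=\rho^{-p}(t(W))$,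 $s(W)=\rho^{-p}(t(X))$, $s(Z)=\rho^{-p}(t(Y))$, $s(Y)=\rho^{-p}(t(Z))$; (C3) $\mathrm{len}(W)+\mathrm{len}(X)=\mathrm{len}(Y)+\mathrm{len}(Z)=p$, and $\mathrm{len}(Q)+\mathrm{len}(R)=\mathrm{len}(S)+\mathrm{len}(T)=12$ if $k\ge1$, all four of length $0$ if $k=0$; (C4) each of $W,X,Y,Z$ has source and internal vertices in $V_0$ and terminal vertex $x_t$ or $y_t$ with $t\in\{p,p+1,p+2\}$; (C5) $t(W)=s(Q)$, $t(X)=s(R)$, $t(Y)=s(S)$, $t(Z)=s(T)$; (C6) if $k\ge1$ and $P\in\{Q,R,S,T\}$ has $s(P)=x_t$ (resp. $y_t$) then $t(P)=x_{t+12}$ (resp. $y_{t+12}$) and all internal vertices of $P$ lie in $V_1$. Type-1 basic set: a 4-tuple $(X,Y,R,S)$ with (C1) $R,S$ vertex-disjoint; if $k\ge1$ then $X,Y$ are vertex-disjoint dipaths, and if $k=0$ they are vertex-disjoint type-1 directed cycles; (C2) $s(X)=\rho^{-p}(t(X))$, $s(Y)=\rho^{-p}(t(Y))$; (C3) $\mathrm{len}(X)=\mathrm{len}(Y)=p$, and $\mathrm{len}(R)=\mathrm{len}(S)=12$ if $k\ge1$, $0$ if $k=0$; (C4) each of $X,Y$ has source and internal vertices in $V_0$ and terminal vertex $x_t$ or $y_t$ with $t\in\{p,p+1,p+2\}$; (C5) $t(X)=s(R)$, $t(Y)=s(S)$; (C6) if $k\ge1$ and $P\in\{R,S\}$ has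 $s(P)=x_t$ (resp. $y_t$) then $t(P)=x_{t+12}$ (resp. $y_{t+12}$) and all internal vertices of $P$ lie in $V_1$. A $\vec{C}_m$-factor is a spanning subdigraph that is a disjoint union of directed $m$-cycles; a $\vec{C}_m$-factorization is a partition of the arc set into $\vec{C}_m$-factors. *)

From mathcomp Require Import all_boot.
Set Implicit Arguments. Unset Strict Implicit. Unset Printing Implicit Defensive.

(* Vertices of G_{2m}: (false, a) is x_a, (true, a) is y_a; a valid vertex has a < m. *)
Definition vtx := (bool * nat)%type.
Definition is_vtx (m : nat) (v : vtx) : bool := v.2 < m.

Definition dif (m : nat) (u v : vtx) : nat := (v.2 + m - u.2) %% m.

(* arc relation of G_{2m} = X(m,{1,3}) wr K_2^* *)
Definition garc (m : nat) (u v : vtx) : bool :=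
  [&& is_vtx m u, is_vtx m v &
      [|| dif m u v == 1, dif m u v == 3 | (u.2 == v.2) && (u.1 != v.1)]].

(* A dipath / closed walk is given by its vertex sequence; its arcs are consecutive pairs. *)
Definition parcs (P : seq vtx) : seq (vtx * vtx) := zip P (behead P).
Definition len (P : seq vtx) : nat := (size P).-1.
Definition olast (P : seq vtx) : option vtx := ohead (rev P).
Definition internal (P : seq vtx) : seq vtx := drop 1 (take (size P).-1 P).
Definition nonterminal (P : seq vtx) : seq vtx := take (size P).-1 P.

(* directed path (no repeated vertex) in G_{2m}; length 0 = single vertex *)
Definition dipath (m : nat) (P : seq vtx) : bool :=
  if P is x :: q then [&& is_vtx m x, path (garc m) x q & uniq P] else false.

(* directed m-cycle, given as a closed walk x_0 x_1 ... x_m with x_m = x_0 *)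
Definition mcycle (m : nat) (C : seq vtx) : bool :=
  if C is x :: q then [&& path (garc m) x q, last x q == x, uniq q & size q == m]
  else false.

Definition arcsum (m : nat) (P : seq vtx) : nat := sumn [seq dif m a.1 a.2 | a <- parcs P].

Definition typed_cycle (m k : nat) (C : seq vtx) : bool :=
  mcycle m C && (arcsum m C == k * m).

(* concatenation of two walks W, X with t(W) = s(X) *)
Definition pcat (W X : seq vtx) : seq vtx := W ++ behead X.

Definition rho_inv (m j : nat) (v : vtx) : vtx := (v.1, (v.2 + (m - j %% m)) %% m).
Definition shift12 (m : nat) (v : vtx) : vtx := (v.1, (v.2 + 12) %% m).

Definition inV0 (p : nat) (v : vtx) : bool := v.2 < p.
Definition inV1 (p : nat) (v : vtx) : bool := (p <= v.2) && (v.2 < p + 12).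

Definition vdisj (P Q : seq vtx) : bool := ~~ has (mem Q) P.
Definition pw_vdisj (l : seq (seq vtx)) : bool := pairwise vdisj l.

Definition C4 (m p : nat) (P : seq vtx) : bool :=
  all (inV0 p) (nonterminal P) &&
  if olast P is Some v then v.2 \in [:: p %% m; (p + 1) %% m; (p + 2) %% m] else false.

Definition C6 (m p : nat) (P : seq vtx) : bool :=
  (olast P == omap (shift12 m) (ohead P)) && all (inV1 p) (internal P).

Record basic2 := Basic2 { bW : seq vtx; bX : seq vtx; bY : seq vtx; bZ : seq vtx;
                          bQ : seq vtx; bR : seq vtx; bS : seq vtx; bT : seq vtx }.
Record basic1 := Basic1 { cX : seq vtx; cY : seq vtx; cR : seq vtx; cS : seq vtx }.

Definition objs2 (B : basic2) : seq (seq vtx) :=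
  [:: bW B; bX B; bY B; bZ B; bQ B; bR B; bS B; bT B].
Definition objs1 (B : basic1) : seq (seq vtx) := [:: cX B; cY B; cR B; cS B].

Definition type2_basic (m p k : nat) (B : basic2) : Prop :=
  let: Basic2 W0 X0 Y0 Z0 Q0 R0 S0 T0 := B in
  (all (dipath m) [:: Q0; R0; S0; T0] /\ pw_vdisj [:: Q0; R0; S0; T0]) /\
  [/\
      (if 1 <= k then all (dipath m) [:: W0; X0; Y0; Z0] && pw_vdisj [:: W0; X0; Y0; Z0]
       else [&& typed_cycle m 2 (pcat W0 X0), typed_cycle m 2 (pcat Y0 Z0)
              & vdisj (pcat W0 X0) (pcat Y0 Z0)]),
      [/\ ohead X0 = omap (rho_inv m p) (olast W0), ohead W0 = omap (rho_inv m p) (olast X0),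
          ohead Z0 = omap (rho_inv m p) (olast Y0) & ohead Y0 = omap (rho_inv m p) (olast Z0)],
      len W0 + len X0 = p /\ len Y0 + len Z0 = p /\
      (if 1 <= k then len Q0 + len R0 = 12 /\ len S0 + len T0 = 12
       else [/\ len Q0 = 0, len R0 = 0, len S0 = 0 & len T0 = 0]),
      all (C4 m p) [:: W0; X0; Y0; Z0] &
      [/\ olast W0 = ohead Q0, olast X0 = ohead R0, olast Y0 = ohead S0 & olast Z0 = ohead T0] /\
      (1 <= k -> all (C6 m p) [:: Q0; R0; S0; T0])].

Definition type1_basic (m p k : nat) (B : basic1) : Prop :=
  let: Basic1 X0 Y0 R0 S0 := B in
  (all (dipath m) [:: R0; S0] /\ vdisj R0 S0) /\
  [/\
      (if 1 <= k then [&& dipath m X0, dipath m Y0 & vdisj X0 Y0]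
       else [&& typed_cycle m 1 X0, typed_cycle m 1 Y0 & vdisj X0 Y0]),
      ohead X0 = omap (rho_inv m p) (olast X0) /\ ohead Y0 = omap (rho_inv m p) (olast Y0),
      len X0 = p /\ len Y0 = p /\
      (if 1 <= k then len R0 = 12 /\ len S0 = 12 else len R0 = 0 /\ len S0 = 0),
      all (C4 m p) [:: X0; Y0] &
      (olast X0 = ohead R0 /\ olast Y0 = ohead S0) /\
      (1 <= k -> all (C6 m p) [:: R0; S0])].

Definition Gverts (m : nat) : seq vtx :=
  [seq (b, i) | b <- [:: false; true], i <- iota 0 m].
Definition Garcs (m : nat) : seq (vtx * vtx) :=
  [seq a <- [seq (u, v) | u <- Gverts m, v <- Gverts m] | garc m a.1 a.2].

Definition Cm_factor (m : nat) (F : seq (seq vtx)) : bool :=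
  all (mcycle m) F && perm_eq (flatten [seq behead C | C <- F]) (Gverts m).

Definition Cm_factorization (m : nat) (FF : seq (seq (seq vtx))) : bool :=
  all (Cm_factor m) FF &&
  perm_eq (flatten [seq flatten [seq parcs C | C <- F] | F <- FF]) (Garcs m).

From mathcomp Require Import all_boot zify.
Set Implicit Arguments. Unset Strict Implicit. Unset Printing Implicit Defensive.

(* Every vertex of G_{2m} has exactly five out-neighbours, so G_{2m} has 10m arcs and
   five C_m-factors whose arcs are pairwise distinct already partition the arc set
   ([factorization_of_uniq]).  Each basic set provides one C_m-factor made of two cycles:
   - for k = 0 the two cycles are part of the data of the basic set;
   - for k >= 1 each dipath A among W, X, Y, Z (resp. X, Y) is followed by the k
     translates rho^{12i}(Q), 0 <= i < k, of the dipath Q of V_1 continuing it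
     ([segment_walk]), and these walks close up into a cycle thanks to (C2)
     ([segment_cycle]).  Its vertices are the non-terminal vertices of the A's, in V_0,
     and the translates of those of the Q's, the i-th translate lying in V_{i+1}; the
     level of a vertex therefore separates all of them, so the two cycles are disjoint
     and have p + 12k = m vertices each ([factor_of_segments]).
   The arcs of the cycles are the arcs of the 32 dipaths, those of the Q's being
   translated ([arc_layered]); the same level argument, applied to sources of arcs,
   turns the arc-disjointness of the dipaths into that of the ten cycles
   ([uniq_arc_layered]), which concludes the proof ([factorization_of_layered]). *)

Lemma olast_cons (x : vtx) s : olast (x :: s) = Some (last x s).
Proof. by rewrite /olast lastI rev_rcons. Qed.

Lemma nonterminal_cons (x : vtx) s : nonterminal (x :: s) = belast x s.
Proof. by rewrite /nonterminal /= lastI -cats1 take_size_cat // size_belast. Qed.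

Lemma size_nonterminal P : size (nonterminal P) = len P.
Proof. by rewrite /nonterminal size_takel // leq_pred. Qed.

Lemma size_parcs P : size (parcs P) = size (behead P).
Proof. by rewrite /parcs size_zip size_behead; case: P => //= _ s; lia. Qed.

Lemma parcs_len0 P : len P = 0 -> parcs P = [::].
Proof. by move=> h; apply/eqP; rewrite -size_eq0 size_parcs size_behead -/(len P) h. Qed.

Lemma mem_parcs a P : a \in parcs P -> a.1 \in nonterminal P /\ a.2 \in P.
Proof.
case: P => // x q; rewrite nonterminal_cons.
elim: q x => //= y q IH x; rewrite inE => /orP[/eqP -> /=|/IH[h1 h2]].
  by rewrite !inE !eqxx orbT.
by rewrite inE h1 orbT inE h2 orbT.
Qed.

Lemma path_parcs (e : rel vtx) x q : path e x q = all (fun a => e a.1 a.2) (parcs (x :: q)).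
Proof. by elim: q x => //= y q IH x; rewrite IH. Qed.

Lemma parcs_pcat P Q : ohead Q = olast P -> parcs (pcat P Q) = parcs P ++ parcs Q.
Proof.
case: Q => [|q Q]; first by case/lastP: P => // P x; rewrite /olast rev_rcons.
case/lastP: P => [//|P x]; rewrite /olast rev_rcons /= => -[<-].
rewrite /pcat /=; elim: P => [|a P IH] //=.
by case: P IH => [|b P] IH; rewrite /parcs //= in IH *; rewrite IH.
Qed.

Lemma olast_pcat P Q : ohead Q = olast P -> olast (pcat P Q) = olast Q.
Proof.
case: Q => [|q Q] /=; first by case: P => //= x s; rewrite olast_cons.
case: P => [|x P] //; rewrite olast_cons => -[->].
by case: Q => [|y Q]; rewrite /pcat /= ?cats0 !olast_cons // last_cat.
Qed.

Lemma nonterminal_pcat P Q : ohead Q = olast P ->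
  nonterminal (pcat P Q) = nonterminal P ++ nonterminal Q.
Proof.
case: Q => [|q Q] /=; first by case: P => //= x s; rewrite olast_cons.
case: P => [|x P] //; rewrite olast_cons => -[->]; rewrite /pcat /=.
by rewrite !nonterminal_cons belast_cat.
Qed.

Definition linked (P Q : seq vtx) : bool := ohead Q == olast P.
Definition concat_walks (Ps : seq (seq vtx)) : seq vtx := foldr pcat [::] Ps.

Lemma concat_walksE P0 Ps : all (fun P => P != [::]) (P0 :: Ps) -> path linked P0 Ps ->
  [/\ parcs (concat_walks (P0 :: Ps)) = flatten (map parcs (P0 :: Ps)),
      nonterminal (concat_walks (P0 :: Ps)) = flatten (map nonterminal (P0 :: Ps)),
      ohead (concat_walks (P0 :: Ps)) = ohead P0 &
      olast (concat_walks (P0 :: Ps)) = olast (last P0 Ps)].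
Proof.
elim: Ps P0 => [|P1 Ps IH] P0 /=.
  by case: P0 => // x s _ _; rewrite /concat_walks /= /pcat /= !cats0.
move=> /and3P[nz0 nz1 nzs] /andP[/eqP l01 pth].
have [IH1 IH2 IH3 IH4] := IH P1 (introT andP (conj nz1 nzs)) pth.
rewrite /concat_walks /= -/(concat_walks (P1 :: Ps)).
have l0 : ohead (concat_walks (P1 :: Ps)) = olast P0 by rewrite IH3.
rewrite parcs_pcat // nonterminal_pcat // olast_pcat // IH1 IH2 IH4.
by case: P0 nz0 {l01 l0}.
Qed.

Lemma closed_walk_behead C : C != [::] -> olast C = ohead C ->
  perm_eq (behead C) (nonterminal C).
Proof.
case: C => // x q _; rewrite olast_cons nonterminal_cons => -[e] /=.
by rewrite -(perm_cons x) {1}(lastI x q) e perm_rcons.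
Qed.

Definition shift (m j : nat) (v : vtx) : vtx := (v.1, (v.2 + j) %% m).
Definition shift_arc (m j : nat) (a : vtx * vtx) : vtx * vtx := (shift m j a.1, shift m j a.2).

Lemma shift_shift m i j v : shift m j (shift m i v) = shift m (i + j) v.
Proof. by rewrite /shift /= modnDml addnA. Qed.

Lemma shift0 m v : v.2 < m -> shift m 0 v = v.
Proof. by case: v => b x /= h; rewrite /shift /= addn0 modn_small. Qed.

Lemma shift_inj m j u v : u.2 < m -> v.2 < m -> shift m j u = shift m j v -> u = v.
Proof.
case: u v => a x [b y] /= hx hy [-> /eqP]; rewrite eqn_modDr !modn_small //.
by move/eqP->.
Qed.

Lemma rho_inv_shift m p k : 0 < p -> m = p + 12 * k -> rho_inv m p =1 shift m (12 * k).
Proof.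
move=> p0 -> v; rewrite /rho_inv /shift; case: k => [|k].
  by rewrite muln0 addn0 modnn subn0 modnDr addn0.
by rewrite (@modn_small p) ?addKn //; lia.
Qed.

(* The difference of an arc is the unique d < m with a + d = b (mod m); hence
   it is invariant under rotation, and rotations are automorphisms of G_{2m}. *)
Lemma dif_spec m u v : u.2 < m -> (u.2 + dif m u v) %% m = v.2 %% m.
Proof.
move=> h; rewrite /dif modnDmr.
have -> : u.2 + (v.2 + m - u.2) = v.2 + m by lia.
by rewrite modnDr.
Qed.

Lemma dif_uniq m u v d : u.2 < m -> d < m -> (u.2 + d) %% m = v.2 %% m -> dif m u v = d.
Proof.
move=> hu hd e.
have /eqP : (u.2 + dif m u v) %% m = (u.2 + d) %% m by rewrite dif_spec // e.
by rewrite eqn_modDl (modn_small hd) modn_small ?ltn_pmod //; [move/eqP | lia].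
Qed.

Lemma dif_shift m j u v : u.2 < m -> dif m (shift m j u) (shift m j v) = dif m u v.
Proof.
move=> hu; apply: dif_uniq; rewrite /shift /= ?ltn_pmod ?ltn_pmod //; try lia.
by rewrite modnDml addnAC -modnDml dif_spec // modnDml modn_mod.
Qed.

Lemma garc_shift m j u v : garc m u v -> garc m (shift m j u) (shift m j v).
Proof.
case/and3P; rewrite /is_vtx => hu hv g; have m0 : 0 < m by lia.
rewrite /garc /is_vtx dif_shift // /shift /= !ltn_pmod //=.
case/or3P: g => [->|->|/andP[/eqP -> ->]]; by rewrite ?eqxx ?orbT.
Qed.

Lemma parcs_map (f : vtx -> vtx) P :
  parcs (map f P) = map (fun a => (f a.1, f a.2)) (parcs P).
Proof. by rewrite /parcs; elim: P => //= x [|y P] //= ->. Qed.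

Lemma nonterminal_map (f : vtx -> vtx) P : nonterminal (map f P) = map f (nonterminal P).
Proof. by rewrite /nonterminal map_take size_map. Qed.

Lemma olast_map (f : vtx -> vtx) P : olast (map f P) = omap f (olast P).
Proof. by rewrite /olast -map_rev; case: (rev P). Qed.

Lemma ohead_map (f : vtx -> vtx) P : ohead (map f P) = omap f (ohead P).
Proof. by case: P. Qed.

Section Translates.
Variables (T : eqType) (f : nat -> T -> T).

Definition translates (k : nat) (q : seq T) : seq T :=
  flatten [seq map (f i) q | i <- iota 0 k].

Lemma translatesS k q : translates k.+1 q = translates k q ++ map (f k) q.
Proof. by rewrite /translates -addn1 iotaD map_cat flatten_cat /= cats0. Qed.

Lemma size_translates k q : size (translates k q) = k * size q.
Proof. by elim: k => // k IH; rewrite translatesS size_cat IH size_map mulSnr. Qed.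

Lemma translatesP k q x :
  x \in translates k q -> exists2 i, i < k & exists2 y, y \in q & x = f i y.
Proof.
elim: k => // k IH; rewrite translatesS mem_cat => /orP[/IH[i ik h]|/mapP[y yq ->]].
  by exists i => //; apply: leqW.
by exists k => //; exists y.
Qed.

Lemma perm_translates_cat k q1 q2 :
  perm_eq (translates k (q1 ++ q2)) (translates k q1 ++ translates k q2).
Proof.
elim: k => // k IH; rewrite !translatesS map_cat.
by rewrite (perm_trans (perm_cat IH (perm_refl _))) // perm_catACA.
Qed.

Lemma perm_flatten_translates (I : Type) k (b q : I -> seq T) (s : seq I) :
  perm_eq (flatten [seq b i ++ translates k (q i) | i <- s])
          (flatten (map b s) ++ translates k (flatten (map q s))).
Proof.
elim: s => [|i s IH] /=; first by rewrite /translates; elim: (iota 0 k).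
rewrite -!catA perm_cat2l; apply: perm_trans (perm_cat (perm_refl _) IH) _.
by rewrite perm_catCA perm_cat2l perm_sym perm_translates_cat.
Qed.

Variable level : T -> nat.

Lemma uniq_layers k b q : uniq b -> uniq q -> all (fun x => level x == 0) b ->
  (forall i, i < k -> {in q &, injective (f i)}) ->
  (forall i x, i < k -> x \in q -> level (f i x) = i.+1) -> uniq (b ++ translates k q).
Proof.
move=> ub uq b0; elim: k => [|k IH] inj lv; first by rewrite cats0.
rewrite translatesS catA cat_uniq (map_inj_in_uniq (inj k (ltnSn k))) uq andbT.
rewrite IH => [|i ik|i x ik]; last 2 first.
- exact: inj (leqW ik).
- exact: lv (leqW ik).
apply/hasPn => _ /mapP[y yq ->]; rewrite mem_cat negb_or.
apply/andP; split; apply/negP.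
- by move=> /(allP b0); rewrite lv.
- move=> /translatesP[i ik [z zq e]].
  by have := lv k y (ltnSn k) yq; rewrite e lv ?(leqW ik) // => -[ki]; lia.
Qed.

End Translates.

Lemma GvertsE m :
  Gverts m = [seq (false, i) | i <- iota 0 m] ++ [seq (true, i) | i <- iota 0 m].
Proof. by rewrite /Gverts /= cats0. Qed.

Lemma mem_Gverts m v : (v \in Gverts m) = is_vtx m v.
Proof.
case: v => b i; rewrite /Gverts /is_vtx; apply/allpairsP/idP => [[[c j] [_ + [_ ->]]]|h].
  by rewrite mem_iota.
by exists (b, i); rewrite mem_iota /= !inE; case: (b).
Qed.

Lemma uniq_Gverts m : uniq (Gverts m).
Proof. by apply: allpairs_uniq; rewrite ?iota_uniq // => -[? ?] [? ?] _ _ /= [-> ->]. Qed.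

Lemma size_Gverts m : size (Gverts m) = 2 * m.
Proof. by rewrite size_allpairs size_iota. Qed.

Lemma garc_is_vtx m u v : garc m u v -> is_vtx m u && is_vtx m v.
Proof. by case/and3P=> -> ->. Qed.

Lemma mem_Garcs m a : (a \in Garcs m) = garc m a.1 a.2.
Proof.
rewrite mem_filter andb_idr // => /garc_is_vtx/andP[hu hv].
by case: a hu hv => u v hu hv; apply: allpairs_f; rewrite mem_Gverts.
Qed.

Lemma uniq_Garcs m : uniq (Garcs m).
Proof.
by rewrite filter_uniq // allpairs_uniq ?uniq_Gverts // => -[? ?] [? ?] _ _ [-> ->].
Qed.

Definition arc_dif (change : bool) (d : nat) : bool := [|| d == 1, d == 3 | (d == 0) && change].

Lemma garc_dif m u b j : is_vtx m u -> j < m ->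
  garc m u (b, j) = arc_dif (u.1 != b) (dif m u (b, j)).
Proof.
move=> hu hj; rewrite /garc hu /is_vtx /= hj /arc_dif /=; congr [|| _, _ | _].
case: (u.1 != b); rewrite ?andbT ?andbF //.
apply/eqP/eqP => [<-|h]; first by apply: dif_uniq => //=; [lia | rewrite addn0].
by have := dif_spec (b, j) hu; rewrite h addn0 !modn_small.
Qed.

Lemma perm_dif m u b : is_vtx m u ->
  perm_eq [seq dif m u (b, j) | j <- iota 0 m] (iota 0 m).
Proof.
move=> hu; have U : uniq [seq dif m u (b, j) | j <- iota 0 m].
  rewrite map_inj_in_uniq ?iota_uniq // => x y; rewrite !mem_iota /= => hx hy e.
  by have := dif_spec (b, x) hu; rewrite e dif_spec //= !modn_small.
have S : {subset [seq dif m u (b, j) | j <- iota 0 m] <= iota 0 m}.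
  move=> _ /mapP[j _ ->]; rewrite mem_iota /dif ltn_pmod //.
  by move: hu; rewrite /is_vtx; lia.
have [_ e] := uniq_min_size U S (eq_leq (esym (size_map _ _))).
exact: uniq_perm U (iota_uniq 0 m) e.
Qed.

Lemma count_arc_dif m c : 3 < m -> count (arc_dif c) (iota 0 m) = 2 + c.
Proof.
move=> h; rewrite -(subnKC h) iotaD count_cat.
have -> : count (arc_dif c) (iota (0 + 4) (m - 4)) = 0.
  apply/eqP; rewrite -leqn0 leqNgt -has_count; apply/hasPn => d.
  by rewrite mem_iota /arc_dif; case: d => [|[|[|[|d]]]].
by case: c.
Qed.

Lemma outdegree m u : 3 < m -> is_vtx m u -> count (garc m u) (Gverts m) = 5.
Proof.
move=> hm hu; rewrite GvertsE count_cat !count_map.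
have e b : count (preim (pair b) (garc m u)) (iota 0 m) = 2 + (u.1 != b).
  rewrite -(count_arc_dif (u.1 != b) hm) -[RHS](permP (perm_dif b hu)) count_map.
  by apply: eq_in_count => j; rewrite mem_iota add0n => /andP[_ hj] /=; rewrite garc_dif.
by rewrite !e; case: (u.1).
Qed.

Lemma size_Garcs m : 3 < m -> size (Garcs m) = 10 * m.
Proof.
move=> hm; rewrite size_filter /Garcs count_flatten -map_comp.
have const5 (s : seq vtx) : sumn [seq 5 | _ <- s] = 5 * size s.
  by elim: s => //= _ s ->; rewrite mulnS.
rewrite (eq_in_map _ (fun=> 5) _).1 ?const5 ?size_Gverts; first lia.
by move=> u; rewrite mem_Gverts /= count_map => /(outdegree hm).
Qed.

Definition family_arcs (F : seq (seq vtx)) : seq (vtx * vtx) := flatten [seq parcs C | C <- F].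

Definition closed_walk (m : nat) (C : seq vtx) : bool :=
  [&& C != [::], all (fun a => garc m a.1 a.2) (parcs C), olast C == ohead C
    & size (behead C) == m].

Lemma mcycleE m C : mcycle m C = closed_walk m C && uniq (behead C).
Proof.
case: C => // x q; rewrite /closed_walk olast_cons /= path_parcs.
have -> : (Some (last x q) == Some x) = (last x q == x) by [].
by case: (all _ _); case: (last x q == x); case: (uniq q); case: (size q == m).
Qed.

Lemma mcycle_is_vtx m C : mcycle m C -> all (is_vtx m) (behead C).
Proof.
case: C => // x q /and4P[+ _ _ _].
by elim: q x => //= y q IH x /andP[/garc_is_vtx/andP[_ ->] /IH].
Qed.

Lemma Cm_factor_pair m C1 C2 : mcycle m C1 -> mcycle m C2 ->
  uniq (behead C1 ++ behead C2) -> Cm_factor m [:: C1; C2].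
Proof.
move=> h1 h2 u; rewrite /Cm_factor /= h1 h2 /= cats0.
have sub : {subset behead C1 ++ behead C2 <= Gverts m}.
  move=> v; rewrite mem_Gverts mem_cat.
  by case/orP; [apply: (allP (mcycle_is_vtx h1)) | apply: (allP (mcycle_is_vtx h2))].
have sz : size (Gverts m) <= size (behead C1 ++ behead C2).
  move: h1 h2; rewrite !mcycleE size_cat size_Gverts.
  by case/andP=> /and4P[_ _ _ /eqP->] _ /andP[/and4P[_ _ _ /eqP->] _]; lia.
have [_ e] := uniq_min_size u sub sz.
exact: uniq_perm u (uniq_Gverts m) e.
Qed.

Lemma size_factor_arcs m F : Cm_factor m F -> size (family_arcs F) = 2 * m.
Proof.
case/andP=> _ /perm_size; rewrite size_Gverts size_flatten => <-.
by rewrite size_flatten /shape -!map_comp; congr sumn; apply: eq_map => C /=; rewrite size_parcs.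
Qed.

(* Five C_m-factors without common arc use all 10m arcs, so they form a
   C_m-factorization. *)
Lemma factorization_of_uniq m FF : 3 < m -> size FF = 5 -> all (Cm_factor m) FF ->
  uniq (flatten (map family_arcs FF)) -> Cm_factorization m FF.
Proof.
move=> hm s5 hf u; rewrite /Cm_factorization hf /=.
have sub : {subset flatten (map family_arcs FF) <= Garcs m}.
  move=> a /flattenP[_ /mapP[F hF ->]] /flattenP[_ /mapP[C hC ->]] ha.
  have /andP[/allP /(_ C hC)] := allP hf F hF.
  by rewrite mcycleE mem_Garcs => /andP[/and4P[_ /allP /(_ a ha) + _ _] _] _.
have sz : size (Garcs m) <= size (flatten (map family_arcs FF)).
  rewrite size_Garcs // size_flatten /shape -map_comp.
  rewrite (eq_in_map _ (fun=> 2 * m) _).1; last by move=> F /(allP hf) /size_factor_arcs.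
  by case: FF s5 {hf u sub} => [|? [|? [|? [|? [|? [|]]]]]] //= _; lia.
have [_ e] := uniq_min_size u sub sz.
exact: uniq_perm u (uniq_Garcs m) e.
Qed.

(* The level of a vertex: 0 on V_0 and i on V_i for i >= 1. *)
Definition level (p : nat) (v : vtx) : nat := if v.2 < p then 0 else ((v.2 - p) %/ 12).+1.

(* The translation rho^{12i}, which maps V_1 onto V_{i+1}. *)
Definition lift_vtx (m i : nat) : vtx -> vtx := shift m (12 * i).
Definition lift_arc (m i : nat) : vtx * vtx -> vtx * vtx := shift_arc m (12 * i).

Lemma level_lift m p k i v : m = p + 12 * k -> i < k -> inV1 p v ->
  level p (lift_vtx m i v) = i.+1.
Proof.
move=> hm ik /andP[h1 h2]; rewrite /lift_vtx /shift /level /= modn_small; last by lia.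
by rewrite ltnNge (leq_trans h1 (leq_addr _ _)) /=; congr S; lia.
Qed.

Definition base_arc (p : nat) (a : vtx * vtx) : bool := a.1.2 < p.
Definition layer_arc (m p : nat) (a : vtx * vtx) : bool := inV1 p a.1 && (a.2.2 < m).

(* [l] consists of the arcs of the walks [O], up to order, where the arcs
   leaving V_1 are replaced by their k translates rho^{12i}, 0 <= i < k. *)
Definition arc_layered (m p k : nat) (l : seq (vtx * vtx)) (O : seq (seq vtx)) : Prop :=
  exists b q, [/\ perm_eq l (b ++ translates (lift_arc m) k q),
                  perm_eq (b ++ q) (family_arcs O), all (base_arc p) b & all (layer_arc m p) q].

Lemma family_arcs_cat O1 O2 : family_arcs (O1 ++ O2) = family_arcs O1 ++ family_arcs O2.
Proof. by rewrite /family_arcs map_cat flatten_cat. Qed.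

Lemma arc_layered_nil m p k : arc_layered m p k [::] [::].
Proof. by exists [::], [::]; rewrite /translates; elim: (iota 0 k). Qed.

Lemma arc_layered_cat m p k l1 O1 l2 O2 : arc_layered m p k l1 O1 ->
  arc_layered m p k l2 O2 -> arc_layered m p k (l1 ++ l2) (O1 ++ O2).
Proof.
move=> [b1 [q1 [e1 f1 g1 h1]]] [b2 [q2 [e2 f2 g2 h2]]].
exists (b1 ++ b2), (q1 ++ q2); rewrite family_arcs_cat !all_cat g1 g2 h1 h2; split => //.
- apply: perm_trans (perm_cat e1 e2) _.
  by rewrite perm_catACA perm_cat2l perm_sym perm_translates_cat.
- by apply: perm_trans (perm_cat f1 f2); rewrite perm_catACA.
Qed.

(* If the walks [O] have no common arc, neither has [l]: translates of arcs
   leaving V_1 leave different levels. *)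
Lemma uniq_arc_layered m p k l O : m = p + 12 * k -> arc_layered m p k l O ->
  uniq (family_arcs O) -> uniq l.
Proof.
move=> hm [b [q [e f hb hq]]]; rewrite (perm_uniq e) -(perm_uniq f) cat_uniq => /and3P[ub _ uq].
apply: (uniq_layers (level := fun a => level p a.1)) => //.
- by apply/sub_all: hb => a; rewrite /base_arc /level => ->.
- move=> i ik [u1 u2] [v1 v2] /(allP hq)/andP[/andP[_ hu1] hu2] /(allP hq)/andP[/andP[_ hv1] hv2].
  move: hu1 hv1 hu2 hv2 => /= hu1 hv1 hu2 hv2 eq.
  have e1 : u1 = v1 by apply: shift_inj (congr1 fst eq) => /=; lia.
  by rewrite e1 (shift_inj hu2 hv2 (congr1 snd eq)).
- by move=> i a ik /(allP hq)/andP[ha _]; exact: level_lift hm ik ha.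
Qed.

Lemma factorization_of_layered m p k (D : seq (seq (seq vtx) * seq (seq vtx))) :
  m = p + 12 * k -> 3 < m -> size D = 5 ->
  (forall d, d \in D -> Cm_factor m d.1 /\ arc_layered m p k (family_arcs d.1) d.2) ->
  uniq (family_arcs (flatten (map snd D))) -> Cm_factorization m (map fst D).
Proof.
move=> hm m3 s5 hD u.
have L : arc_layered m p k (flatten (map family_arcs (map fst D))) (flatten (map snd D)).
  elim: D {s5 u} hD => [|d D IH] hD /=; first exact: arc_layered_nil.
  apply: arc_layered_cat; first exact: (hD d (mem_head _ _)).2.
  by apply: IH => e he; apply: hD; rewrite inE he orbT.
apply: factorization_of_uniq; rewrite ?size_map //; last exact: uniq_arc_layered hm L u.
by apply/allP => _ /mapP[d hd ->]; exact: (hD d hd).1.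
Qed.

Definition lifts (m k : nat) (Q : seq vtx) : seq (seq vtx) :=
  [seq map (lift_vtx m i) Q | i <- iota 0 k].

Lemma liftsS m k Q : lifts m k.+1 Q = rcons (lifts m k Q) (map (lift_vtx m k) Q).
Proof. by rewrite /lifts -addn1 iotaD map_cat cats1. Qed.

Lemma lifts_linked m k A Q v : olast A = Some v -> ohead Q = Some v ->
  olast Q = Some (shift m 12 v) -> v.2 < m ->
  path linked A (lifts m k Q) /\ olast (last A (lifts m k Q)) = Some (lift_vtx m k v).
Proof.
move=> hA hQ hQ' hv; elim: k => [|k [IH1 IH2]]; first by rewrite /lift_vtx shift0.
rewrite liftsS rcons_path last_rcons IH1 /linked IH2 ohead_map olast_map hQ hQ' eqxx.
by rewrite /= /lift_vtx shift_shift mulnS.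
Qed.

Definition segment_ok (m : nat) (s : seq vtx * seq vtx) : bool :=
  if olast s.1 is Some v then
    [&& v.2 < m, ohead s.2 == Some v & olast s.2 == Some (shift m 12 v)]
  else false.

Definition segment_walk (m k : nat) (s : seq vtx * seq vtx) : seq vtx :=
  concat_walks (s.1 :: lifts m k s.2).

Lemma segment_walkE m k s : segment_ok m s ->
  [/\ parcs (segment_walk m k s) = parcs s.1 ++ translates (lift_arc m) k (parcs s.2),
      nonterminal (segment_walk m k s) =
        nonterminal s.1 ++ translates (lift_vtx m) k (nonterminal s.2),
      ohead (segment_walk m k s) = ohead s.1 &
      olast (segment_walk m k s) = omap (lift_vtx m k) (olast s.1)].
Proof.
case: s => A Q; rewrite /segment_ok /=; case hA: (olast A) => [v|] //.
case/and3P=> hv /eqP hQ /eqP hQ'; have [pth hl] := lifts_linked k hA hQ hQ' hv.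
have nz : all (fun P => P != [::]) (A :: lifts m k Q).
  apply/andP; split; first by case: (A) hA.
  by apply/allP => _ /mapP[i _ ->]; case: Q hQ {hQ' pth hl}.
have [-> -> -> ->] := concat_walksE nz pth; rewrite hl; split => //=; congr (_ ++ _);
  rewrite /translates /lifts -map_comp; congr flatten; apply: eq_map => i /=.
- exact: parcs_map.
- exact: nonterminal_map.
Qed.

Definition seg_linked (m k : nat) (s t : seq vtx * seq vtx) : bool :=
  ohead t.1 == omap (lift_vtx m k) (olast s.1).

Definition segment_cycle (m k : nat) (S : seq (seq vtx * seq vtx)) : seq vtx :=
  concat_walks (map (segment_walk m k) S).

Lemma segment_cycleE m k S : S != [::] -> all (segment_ok m) S -> cycle (seg_linked m k) S ->
  [/\ segment_cycle m k S != [::], olast (segment_cycle m k S) = ohead (segment_cycle m k S),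
      perm_eq (parcs (segment_cycle m k S))
        (flatten [seq parcs s.1 | s <- S] ++
         translates (lift_arc m) k (flatten [seq parcs s.2 | s <- S])) &
      perm_eq (behead (segment_cycle m k S))
        (flatten [seq nonterminal s.1 | s <- S] ++
         translates (lift_vtx m) k (flatten [seq nonterminal s.2 | s <- S]))].
Proof.
case: S => // s0 S _ ok cyc.
have hU := fun s (hs : segment_ok m s) => segment_walkE k hs.
have nz s : segment_ok m s -> segment_walk m k s != [::].
  move=> hs; have [_ _ + _] := hU s hs; move: hs; rewrite /segment_ok.
  by case: (segment_walk m k s) => //; case: s.1 => [|? ?] //= _ <-.
have : cycle linked (map (segment_walk m k) (s0 :: S)).
  rewrite cycle_map; apply: sub_in_cycle ok cyc => s t hs ht /=.
  by rewrite /seg_linked /linked; have [_ _ _ ->] := hU s hs; have [_ _ -> _] := hU t ht.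
rewrite /= rcons_path => /andP[pth /eqP cl].
have nzU : all (fun P => P != [::]) (map (segment_walk m k) (s0 :: S)).
  by apply/allP => _ /mapP[s /(allP ok) hs ->]; apply: nz.
have [e1 e2 e3 e4] := concat_walksE nzU pth.
have closed : olast (segment_cycle m k (s0 :: S)) = ohead (segment_cycle m k (s0 :: S)).
  by rewrite /segment_cycle /= e3 e4 cl.
have nzC : segment_cycle m k (s0 :: S) != [::].
  by move: (nz s0 (allP ok s0 (mem_head _ _))); rewrite /segment_cycle /= /pcat; case: segment_walk.
split => //.
- have -> : parcs (segment_cycle m k (s0 :: S)) =
      flatten [seq parcs s.1 ++ translates (lift_arc m) k (parcs s.2) | s <- s0 :: S].
    transitivity (flatten (map (parcs \o segment_walk m k) (s0 :: S))).
      by rewrite map_comp; exact: e1.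
    by congr flatten; apply/eq_in_map => s /(allP ok) /hU[].
  exact: perm_flatten_translates.
- apply: perm_trans (closed_walk_behead nzC closed) _.
  have -> : nonterminal (segment_cycle m k (s0 :: S)) =
      flatten [seq nonterminal s.1 ++ translates (lift_vtx m) k (nonterminal s.2) | s <- s0 :: S].
    transitivity (flatten (map (nonterminal \o segment_walk m k) (s0 :: S))).
      by rewrite map_comp; exact: e2.
    by congr flatten; apply/eq_in_map => s /(allP ok) /hU[].
  exact: perm_flatten_translates.
Qed.

Lemma dipathP m P : dipath m P ->
  [/\ P != [::], all (fun a => garc m a.1 a.2) (parcs P) & uniq P].
Proof. by case: P => // x q /and3P[_ pth u]; rewrite -path_parcs pth u. Qed.

Lemma all_nonterminal (a : pred vtx) x q : a x -> all a (internal (x :: q)) ->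
  all a (nonterminal (x :: q)).
Proof.
move=> ax ai; rewrite -(cat_take_drop 1 (nonterminal _)) all_cat ai andbT.
by rewrite nonterminal_cons; case: q {ai} => //= ? ?; rewrite ax take0.
Qed.

Definition basic_segment (m p : nat) (s : seq vtx * seq vtx) : bool :=
  [&& dipath m s.1, dipath m s.2, C4 m p s.1, olast s.1 == ohead s.2 & C6 m p s.2].

Lemma basic_segmentP m p s : p + 12 <= m -> basic_segment m p s ->
  [/\ segment_ok m s, all (inV0 p) (nonterminal s.1), all (inV1 p) (nonterminal s.2),
      all (base_arc p) (parcs s.1) & all (layer_arc m p) (parcs s.2)].
Proof.
case: s => A Q hm; rewrite /basic_segment /= => /and5P[dA dQ /andP[ntA hl] /eqP c5].
case/andP=> /eqP c6 c6i.
have [_ gA _] := dipathP dA; have [_ gQ _] := dipathP dQ.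
case hv : (olast A) hl c5 => [v|] // hl c5.
have vV1 : inV1 p v.
  by move: hl; rewrite /inV1 !inE !modn_small; try lia; case/or3P => /eqP ->; lia.
have ntQ : all (inV1 p) (nonterminal Q).
  by case: Q c5 c6i {dQ gQ c6} => // x q [<-]; apply: all_nonterminal.
split => //.
- rewrite /segment_ok hv c6 -c5 eqxx /=; apply/andP; split => //.
  by move: vV1 => /andP[_]; lia.
- by apply/allP => a /mem_parcs[/(allP ntA)].
- apply/allP => a ha; have [h1 _] := mem_parcs ha; rewrite /layer_arc (allP ntQ _ h1).
  by have /garc_is_vtx/andP[_] := allP gQ a ha.
Qed.

Lemma all_flatten_map (T I : eqType) (a : pred T) (f : I -> seq T) (S : seq I) :
  (forall s, s \in S -> all a (f s)) -> all a (flatten (map f S)).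
Proof. by move=> h; apply/allP => x /flattenP[_ /mapP[s hs ->] /(allP (h s hs))]. Qed.

Lemma size_nonterminals (I : Type) (f : I -> seq vtx) (S : seq I) :
  size (flatten [seq nonterminal (f s) | s <- S]) = sumn [seq len (f s) | s <- S].
Proof. by elim: S => //= s S IH; rewrite size_cat IH size_nonterminal. Qed.

Definition segment_family (m p k : nat) (S : seq (seq vtx * seq vtx)) : bool :=
  [&& S != [::], all (basic_segment m p) S, cycle (seg_linked m k) S,
      sumn [seq len s.1 | s <- S] == p & sumn [seq len s.2 | s <- S] == 12].

Lemma segment_family_cycle m p k S : m = p + 12 * k -> 0 < k -> segment_family m p k S ->
  [/\ closed_walk m (segment_cycle m k S),
      perm_eq (behead (segment_cycle m k S))
        (flatten [seq nonterminal s.1 | s <- S] ++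
         translates (lift_vtx m) k (flatten [seq nonterminal s.2 | s <- S])),
      all (inV0 p) (flatten [seq nonterminal s.1 | s <- S]),
      all (inV1 p) (flatten [seq nonterminal s.2 | s <- S]) &
      arc_layered m p k (parcs (segment_cycle m k S)) (map fst S ++ map snd S)].
Proof.
move=> hm k0 /and5P[nS bS cyc /eqP sA /eqP sQ].
have hm12 : p + 12 <= m by lia.
have bP s : s \in S -> _ := fun hs => basic_segmentP hm12 (allP bS s hs).
have ok : all (segment_ok m) S by apply/allP => s /bP[].
have [nC cl eA eN] := segment_cycleE nS ok cyc.
have arcs_ok s : s \in S -> all (fun a => garc m a.1 a.2) (parcs s.1 ++ parcs s.2).
  by move=> /(allP bS) /and5P[/dipathP[_ g1 _] /dipathP[_ g2 _] _ _ _]; rewrite all_cat g1 g2.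
have gC : all (fun a => garc m a.1 a.2) (parcs (segment_cycle m k S)).
  rewrite (perm_all _ eA) all_cat; apply/andP; split.
    apply/allP => a /flattenP[_ /mapP[s hs ->] ha].
    by apply: (allP (arcs_ok s hs)); rewrite mem_cat ha.
  apply/allP => _ /translatesP[i _ [a /flattenP[_ /mapP[s hs ->] ha] ->]].
  by apply: garc_shift; apply: (allP (arcs_ok s hs)); rewrite mem_cat ha orbT.
split.
- rewrite /closed_walk nC gC cl eqxx (perm_size eN) size_cat size_translates /=.
  by rewrite !size_nonterminals sA sQ hm mulnC.
- exact: eN.
- by apply: all_flatten_map => s /bP[].
- by apply: all_flatten_map => s /bP[].
- exists (flatten [seq parcs s.1 | s <- S]), (flatten [seq parcs s.2 | s <- S]).
  split => //; first by rewrite family_arcs_cat /family_arcs -!map_comp.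
  + by apply: all_flatten_map => s /bP[].
  + by apply: all_flatten_map => s /bP[].
Qed.

Lemma arc_layered_perm m p k l O O' : perm_eq O O' -> arc_layered m p k l O -> arc_layered m p k l O'.
Proof.
move=> eO [b [q [e f hb hq]]]; exists b, q; split => //.
by apply: perm_trans f _; apply: perm_flatten; apply: perm_map.
Qed.

Lemma uniq_nonterminals l : all uniq l -> pw_vdisj l -> uniq (flatten (map nonterminal l)).
Proof.
have sub P : {subset nonterminal P <= P} by move=> x /mem_take.
rewrite /pw_vdisj; elim: l => //= P l IH /andP[uP ul] /andP[dP pl].
rewrite cat_uniq IH // take_uniq //= andbT.
apply/hasPn => x /flattenP[_ /mapP[Q Ql ->]] xQ; apply/negP => xP.
by have /hasPn /(_ x (sub _ _ xP)) /negP := allP dP Q Ql; apply; apply: sub.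
Qed.

Lemma factor_of_segments m p k S1 S2 : m = p + 12 * k -> 0 < k ->
  segment_family m p k S1 -> segment_family m p k S2 ->
  pw_vdisj (map fst (S1 ++ S2)) -> pw_vdisj (map snd (S1 ++ S2)) ->
  Cm_factor m [:: segment_cycle m k S1; segment_cycle m k S2] /\
  arc_layered m p k (family_arcs [:: segment_cycle m k S1; segment_cycle m k S2])
    (map fst (S1 ++ S2) ++ map snd (S1 ++ S2)).
Proof.
move=> hm k0 f1 f2 dA dQ.
have [c1 e1 a1 q1 l1] := segment_family_cycle hm k0 f1.
have [c2 e2 a2 q2 l2] := segment_family_cycle hm k0 f2.
have bS : all (basic_segment m p) (S1 ++ S2).
  by move: f1 f2 => /and5P[_ b1 _ _ _] /and5P[_ b2 _ _ _]; rewrite all_cat b1 b2.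
have uA : all uniq (map fst (S1 ++ S2)).
  by rewrite all_map; apply: sub_all bS => s /and5P[/dipathP[]].
have uQ : all uniq (map snd (S1 ++ S2)).
  by rewrite all_map; apply: sub_all bS => s /and5P[_ /dipathP[]].
pose NA S := flatten [seq nonterminal s.1 | s <- S : seq (seq vtx * seq vtx)].
pose NQ S := flatten [seq nonterminal s.2 | s <- S : seq (seq vtx * seq vtx)].
have NAcat : NA (S1 ++ S2) = NA S1 ++ NA S2 by rewrite /NA map_cat flatten_cat.
have NQcat : NQ (S1 ++ S2) = NQ S1 ++ NQ S2 by rewrite /NQ map_cat flatten_cat.
have U : uniq (NA (S1 ++ S2) ++ translates (lift_vtx m) k (NQ (S1 ++ S2))).
  apply: (uniq_layers (level := level p)).
  - by move: (uniq_nonterminals uA dA); rewrite -map_comp.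
  - by move: (uniq_nonterminals uQ dQ); rewrite -map_comp.
  - by rewrite NAcat all_cat; apply/andP; split; [apply: sub_all a1 | apply: sub_all a2] => v;
      rewrite /inV0 /level => ->.
  - have hm12 : p + 12 <= m by rewrite hm leq_add2l leq_pmulr.
    have lt_m w : w \in NQ S1 ++ NQ S2 -> w.2 < m.
      by rewrite mem_cat => /orP[/(allP q1)|/(allP q2)] /andP[_ /leq_trans]; apply.
    by move=> i ik u v; rewrite NQcat => /lt_m hu /lt_m hv; apply: shift_inj.
  - move=> i v ik; rewrite NQcat mem_cat => /orP[/(allP q1)|/(allP q2)]; exact: level_lift hm ik.
have P : perm_eq (behead (segment_cycle m k S1) ++ behead (segment_cycle m k S2))
                 (NA (S1 ++ S2) ++ translates (lift_vtx m) k (NQ (S1 ++ S2))).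
  apply: perm_trans (perm_cat e1 e2) _.
  by rewrite NAcat NQcat perm_catACA perm_cat2l perm_sym perm_translates_cat.
split.
- move: U; rewrite -(perm_uniq P) => U; move: (U); rewrite cat_uniq => /and3P[u1 _ u2].
  by apply: Cm_factor_pair U; rewrite mcycleE ?c1 ?c2.
- rewrite /family_arcs /= cats0; apply: arc_layered_perm (arc_layered_cat l1 l2).
  by rewrite !map_cat perm_catACA.
Qed.

Lemma type2_layered_pos m p k A : 0 < p -> 0 < k -> m = p + 12 * k ->
  type2_basic m p k A -> exists F, Cm_factor m F /\ arc_layered m p k (family_arcs F) (objs2 A).
Proof.
case: A => W X Y Z Q R S T p0 k0 hm.
move=> [[/and5P[dQ dR dS dT _] pwQ] [hWd [c2a c2b c2c c2d] [l1 [l2 l3]] c4 [[c5a c5b c5c c5d] c6]]].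
rewrite k0 in hWd l3; move: (c6 k0) l3 => /and5P[c6Q c6R c6S c6T _] [l3 l4].
move: hWd c4 => /andP[/and5P[dW dX dY dZ _] pwW] /and5P[c4W c4X c4Y c4Z _].
rewrite !(eq_omap (rho_inv_shift p0 hm)) in c2a c2b c2c c2d.
exists [:: segment_cycle m k [:: (W, Q); (X, R)]; segment_cycle m k [:: (Y, S); (Z, T)]].
apply: factor_of_segments => //; rewrite /segment_family /= /basic_segment /= /seg_linked /=.
- by rewrite c2a c2b dW dX dQ dR c4W c4X c6Q c6R c5a c5b !addn0 l1 l3 !eqxx.
- by rewrite c2c c2d dY dZ dS dT c4Y c4Z c6S c6T c5c c5d !addn0 l2 l4 !eqxx.
Qed.

Lemma type1_layered_pos m p k B : 0 < p -> 0 < k -> m = p + 12 * k ->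
  type1_basic m p k B -> exists F, Cm_factor m F /\ arc_layered m p k (family_arcs F) (objs1 B).
Proof.
case: B => X Y R S p0 k0 hm.
move=> [[/and3P[dR dS _] vRS] [hXd [c2a c2b] [l1 [l2 l3]] c4 [[c5a c5b] c6]]].
rewrite k0 in hXd l3; move: (c6 k0) l3 => /and3P[c6R c6S _] [l3 l4].
move: hXd c4 => /and3P[dX dY vXY] /and3P[c4X c4Y _].
rewrite !(eq_omap (rho_inv_shift p0 hm)) in c2a c2b.
exists [:: segment_cycle m k [:: (X, R)]; segment_cycle m k [:: (Y, S)]].
apply: factor_of_segments; rewrite /pw_vdisj /segment_family /= /basic_segment /= /seg_linked /=
  ?vXY ?vRS //.
- by rewrite c2a dX dR c4X c6R c5a !addn0 l1 l3 !eqxx.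
- by rewrite c2b dY dS c4Y c6S c5b !addn0 l2 l4 !eqxx.
Qed.

Lemma C4_olast_shift0 m p P : 0 < m -> C4 m p P -> omap (shift m 0) (olast P) = olast P.
Proof.
move=> m0 /andP[_]; case: (olast P) => //= v hv; rewrite shift0 //.
by move: hv; rewrite !inE => /or3P[] /eqP ->; rewrite ltn_pmod.
Qed.

Lemma factor_of_cycles m C1 C2 : mcycle m C1 -> mcycle m C2 -> vdisj C1 C2 ->
  Cm_factor m [:: C1; C2].
Proof.
move=> h1 h2 v; apply: Cm_factor_pair => //; rewrite cat_uniq.
move: h1 h2; rewrite !mcycleE => /andP[_ ->] /andP[_ ->] /=; rewrite andbT.
apply/hasPn => x x2; apply/negP => x1.
by move: v => /hasPn /(_ x (mem_behead x1)) /negP; apply; exact: mem_behead.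
Qed.

Lemma arc_layered_base m l O : all (fun a => garc m a.1 a.2) l -> perm_eq l (family_arcs O) ->
  arc_layered m m 0 l O.
Proof.
move=> g e; exists l, [::]; rewrite /translates /= !cats0; split => //.
by apply: sub_all g => a /garc_is_vtx /andP[].
Qed.

Lemma family_arcs_cycles m F : all (mcycle m) F -> all (fun a => garc m a.1 a.2) (family_arcs F).
Proof.
move=> hF; apply: all_flatten_map => C /(allP hF).
by rewrite mcycleE => /andP[/and4P[_ -> _ _] _].
Qed.

Lemma type2_layered_zero m p A : 0 < p -> m = p ->
  type2_basic m p 0 A -> exists F, Cm_factor m F /\ arc_layered m p 0 (family_arcs F) (objs2 A).
Proof.
case: A => W X Y Z Q R S T p0 hm.
move=> [_ [/and3P[/andP[t1 _] /andP[t2 _] v] [c2a _ c2c _] [_ [_ [q0 r0 s0 t0]]] c4 _]].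
move: c4 => /and5P[c4W _ c4Y _ _].
have hm0 : m = p + 12 * 0 by rewrite muln0 addn0.
rewrite !(eq_omap (rho_inv_shift p0 hm0)) muln0 in c2a c2c.
have m0 : 0 < m by rewrite hm.
rewrite (C4_olast_shift0 m0 c4W) in c2a; rewrite (C4_olast_shift0 m0 c4Y) in c2c.
exists [:: pcat W X; pcat Y Z]; split; first exact: factor_of_cycles.
rewrite -hm; apply: arc_layered_base; first by apply: family_arcs_cycles; rewrite /= t1 t2.
by rewrite /family_arcs /= !parcs_pcat // (parcs_len0 q0) (parcs_len0 r0) (parcs_len0 s0)
  (parcs_len0 t0) !cats0 !catA.
Qed.

Lemma type1_layered_zero m p B : m = p ->
  type1_basic m p 0 B -> exists F, Cm_factor m F /\ arc_layered m p 0 (family_arcs F) (objs1 B).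
Proof.
case: B => X Y R S hm [_ [/and3P[/andP[t1 _] /andP[t2 _] v] _ [_ [_ [r0 s0]]] _ _]].
exists [:: X; Y]; split; first exact: factor_of_cycles.
rewrite -hm; apply: arc_layered_base; first by apply: family_arcs_cycles; rewrite /= t1 t2.
by rewrite /family_arcs /= (parcs_len0 r0) (parcs_len0 s0) !cats0.
Qed.

Lemma type2_layered m p k A : 0 < p -> m = p + 12 * k -> type2_basic m p k A ->
  exists F, Cm_factor m F /\ arc_layered m p k (family_arcs F) (objs2 A).
Proof.
move=> p0 hm; case: (posnP k) => [k0|k0]; last exact: type2_layered_pos.
by subst k; apply: type2_layered_zero; rewrite // hm muln0 addn0.
Qed.

Lemma type1_layered m p k B : 0 < p -> m = p + 12 * k -> type1_basic m p k B ->
  exists F, Cm_factor m F /\ arc_layered m p k (family_arcs F) (objs1 B).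
Proof.
move=> p0 hm; case: (posnP k) => [k0|k0]; last exact: type1_layered_pos.
by subst k; apply: type1_layered_zero; rewrite hm muln0 addn0.
Qed.

Theorem mainTheorem7 (p k m : nat) :
  p \in [:: 11; 13; 17; 19] ->
  m = p + 12 * k ->
  (exists (A1 A2 A3 : basic2) (B1 B2 : basic1),
      [/\ type2_basic m p k A1, type2_basic m p k A2, type2_basic m p k A3,
          type1_basic m p k B1 /\ type1_basic m p k B2 &
          uniq (flatten [seq parcs P | P <- objs2 A1 ++ objs2 A2 ++ objs2 A3
                                             ++ objs1 B1 ++ objs1 B2])]) ->
  exists FF : seq (seq (seq vtx)), Cm_factorization m FF.
Proof.
move=> hp hm [A1 [A2 [A3 [B1 [B2 [h1 h2 h3 [h4 h5] hu]]]]]].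
have p11 : 10 < p by move: hp; rewrite !inE => /or4P[] /eqP ->.
have p0 : 0 < p by apply: leq_trans p11.
have m3 : 3 < m by rewrite hm (leq_trans _ (leq_addr _ _)) // (leq_trans _ p11).
have [F1 f1] := type2_layered p0 hm h1.
have [F2 f2] := type2_layered p0 hm h2.
have [F3 f3] := type2_layered p0 hm h3.
have [F4 f4] := type1_layered p0 hm h4.
have [F5 f5] := type1_layered p0 hm h5.
pose D := [:: (F1, objs2 A1); (F2, objs2 A2); (F3, objs2 A3); (F4, objs1 B1); (F5, objs1 B2)].
exists (map fst D); apply: (factorization_of_layered hm m3) => //.
- by move=> d; rewrite !inE => /orP[|/orP[|/orP[|/orP[]]]] /eqP ->.
Qed.
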